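(* The affine algebraic set of primitive non-zero idempotents in $\mathfrak{J}(0)$ consists of two disjoint irreducible components of dimension one. Furthermore, the two generators $\mathfrak{a}$ and $\mathfrak{b}$ of $\mathfrak{J}(0)$ belong to different components.
   Context: $\mathbb{F}$ is a field of characteristic not $2$. $\mathfrak{J}(0)$ is the commutative algebra over $\mathbb{F}$ with basis $\mathfrak{a},\mathfrak{b},\sigma$ and product $\mathfrak{a}^2=\mathfrak{a}$, $\mathfrak{b}^2=\mathfrak{b}$, $\mathfrak{a}\mathfrak{b}=\frac12\mathfrak{a}+\frac12\mathfrak{b}+\sigma$, $\mathfrak{a}\sigma=-\frac12\mathfrak{a}$, $\mathfrak{b}\sigma=-\frac12\mathfrak{b}$, $\sigma^2=-\frac12\sigma$; its identity element is $-2\sigma$. Idempotents are viewed as points of $\mathbb{F}^3$ via coordinates with respect to the basis $\mathfrak{a},\mathfrak{b},\sigma$; an idempotent $e$ is primitive if $\{u:eu=u\}=\mathbb{F}e$. *)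

From HB Require Import structures.
From mathcomp Require Import all_boot all_order all_algebra.
Set Implicit Arguments. Unset Strict Implicit. Unset Printing Implicit Defensive.
Import GRing.Theory.
Local Open Scope ring_scope.

(* The algebra J(0) over a field F: elements are coordinate row vectors
   (x 0 0, x 0 1, x 0 2) w.r.t. the basis a, b, sigma. *)

Definition mkv (F : fieldType) (p q r : F) : 'rV[F]_3 :=
  \row_(i < 3) nth 0 [:: p; q; r] i.

Definition ja (F : fieldType) : 'rV[F]_3 := mkv 1 0 0.
Definition jb (F : fieldType) : 'rV[F]_3 := mkv 0 1 0.
Definition jsig (F : fieldType) : 'rV[F]_3 := mkv 0 0 1.

Definition jtab (F : fieldType) (i j : 'I_3) : 'rV[F]_3 :=
  match nat_of_ord i, nat_of_ord j with
  | 0, 0 => ja F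
  | 1, 1 => jb F
  | 0, 1 | 1, 0 => mkv (2^-1) (2^-1) 1
  | 0, 2 | 2, 0 => mkv (- 2^-1) 0 0
  | 1, 2 | 2, 1 => mkv 0 (- 2^-1) 0
  | _, _ => mkv 0 0 (- 2^-1)
  end.

Definition jmul (F : fieldType) (x y : 'rV[F]_3) : 'rV[F]_3 :=
  \sum_(i < 3) \sum_(j < 3) (x 0 i * y 0 j) *: jtab F i j.

Definition idempotent (F : fieldType) (e : 'rV[F]_3) : Prop := jmul e e = e.

Definition primitive (F : fieldType) (e : 'rV[F]_3) : Prop :=
  forall u : 'rV[F]_3, jmul e u = u <-> exists c : F, u = c *: e.

Definition prim_nz_idem (F : fieldType) (e : 'rV[F]_3) : Prop :=
  e <> 0 /\ idempotent e /\ primitive e.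

(* An affine line in F^3 (a 1-dimensional irreducible affine variety). *)
Definition affine_line (F : fieldType) (L : 'rV[F]_3 -> Prop) : Prop :=
  exists (p v : 'rV[F]_3), v <> 0 /\
    forall x, L x <-> exists t : F, x = p + t *: v.

From Pilot Require Import Defs.
From mathcomp Require Import all_boot all_order all_algebra.
From mathcomp Require Import ring.

Set Implicit Arguments.
Unset Strict Implicit.
Unset Printing Implicit Defensive.
Import GRing.Theory.
Local Open Scope ring_scope.

(* Writing e = p a + q b + r sigma, e is idempotent iff p s = q s = 0 and
   4 p q = r (r + 2), where s = p + q - r - 1.  If s <> 0 then e is 0 or the
   identity -2 sigma, and the identity is not primitive.  If s = 0 then
   (p - q)^2 = 1, so e lies on one of the parallel lines a + F (a + b + 2 sigma)
   and b + F (a + b + 2 sigma), which are exchanged by the automorphism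
   a <-> b.  For e on the first line, the space {u : e u = u} is cut out by two
   independent linear equations, hence equals F e. *)

Section Coordinates.
Variable F : fieldType.
Implicit Types (p q r x y z : F) (u v : 'rV[F]_3).

Lemma mkv_eta u : u = mkv (u 0 0) (u 0 1) (u 0 2).
Proof.
apply/rowP => -[[|[|[|i]]] lti] //; rewrite mxE /= ?ord1 //;
  by congr (u _ _); exact: val_inj.
Qed.

Lemma mkv_inj p q r x y z : mkv p q r = mkv x y z -> [/\ p = x, q = y & r = z].
Proof.
move=> E; have coord i : mkv p q r 0 i = mkv x y z 0 i by rewrite E.
by have := coord 0; have := coord 1; have := coord 2; rewrite !mxE.
Qed.

Lemma mkv0 : mkv 0 0 0 = 0 :> 'rV[F]_3.
Proof. by apply/rowP => -[[|[|[|i]]] lti]; rewrite !mxE. Qed.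

Lemma mkv_eq0 p q r : mkv p q r = 0 <-> [/\ p = 0, q = 0 & r = 0].
Proof. by rewrite -mkv0; split => [/mkv_inj | [-> -> ->]]. Qed.

Lemma scale_mkv c p q r : c *: mkv p q r = mkv (c * p) (c * q) (c * r).
Proof. by apply/rowP => -[[|[|[|i]]] lti]; rewrite !mxE //= mulr0. Qed.

Lemma add_mkv p q r x y z : mkv p q r + mkv x y z = mkv (p + x) (q + y) (r + z).
Proof. by apply/rowP => -[[|[|[|i]]] lti]; rewrite !mxE //= addr0. Qed.

Lemma sub_mkv p q r x y z : mkv p q r - mkv x y z = mkv (p - x) (q - y) (r - z).
Proof. by apply/rowP => -[[|[|[|i]]] lti]; rewrite !mxE //= subr0. Qed.

Lemma jmul_mkv p q r x y z :
  jmul (mkv p q r) (mkv x y z) =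
  mkv (p * x + 2^-1 * (p * y + q * x) - 2^-1 * (p * z + r * x))
      (q * y + 2^-1 * (p * y + q * x) - 2^-1 * (q * z + r * y))
      (p * y + q * x - 2^-1 * (r * z)).
Proof.
rewrite /jmul !big_ord_recl !big_ord0 !addr0.
by apply/rowP => -[[|[|[|i]]] lti]; rewrite !mxE //=; ring.
Qed.

Definition jswap u := mkv (u 0 1) (u 0 0) (u 0 2).

Lemma jswap_mkv p q r : jswap (mkv p q r) = mkv q p r.
Proof. by rewrite /jswap !mxE. Qed.

Lemma jswapK : involutive jswap.
Proof. by move=> u; rewrite {1}[u]mkv_eta !jswap_mkv -mkv_eta. Qed.

Lemma jswapZ c u : jswap (c *: u) = c *: jswap u.
Proof. by rewrite [u]mkv_eta scale_mkv !jswap_mkv scale_mkv. Qed.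

Lemma jswap_jmul u v : jswap (jmul u v) = jmul (jswap u) (jswap v).
Proof.
rewrite [u]mkv_eta [v]mkv_eta !jswap_mkv !jmul_mkv jswap_mkv.
by congr mkv; ring.
Qed.

Lemma prim_nz_idem_jswap e : prim_nz_idem e -> prim_nz_idem (jswap e).
Proof.
case=> nz_e [idem_e prim_e]; split; [|split].
- by move=> /(congr1 jswap); rewrite jswapK -mkv0 jswap_mkv mkv0.
- by rewrite /Defs.idempotent -jswap_jmul idem_e.
move=> u; have [w ->] : exists w, u = jswap w by exists (jswap u); rewrite jswapK.
rewrite -jswap_jmul; split => [/(can_inj jswapK)/prim_e [c ->] | [c]].
  by exists c; rewrite jswapZ.
by rewrite -jswapZ => /(can_inj jswapK) ->; congr jswap; apply/prim_e; exists c.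
Qed.

End Coordinates.

Section Idempotents.
Variable F : fieldType.
Hypothesis two_neq0 : (2%:R : F) != 0.
Implicit Types (p q r s t : F) (u : 'rV[F]_3).

Definition jone : 'rV[F]_3 := mkv 0 0 (-2).

Lemma jmul1l u : jmul jone u = u.
Proof. by rewrite [u]mkv_eta jmul_mkv; congr mkv; field. Qed.

Lemma jone_not_primitive : ~ primitive jone.
Proof.
move=> /(_ (ja F)) [/(_ (jmul1l _)) [c]].
by rewrite scale_mkv => /mkv_inj [/eqP]; rewrite mulr0 oner_eq0.
Qed.

Lemma idempotent_mkv_eqs p q r : Defs.idempotent (mkv p q r) ->
  [/\ p * (p + q - r - 1) = 0, q * (p + q - r - 1) = 0 & 4 * p * q = r * (r + 2)].
Proof.
have diffE : jmul (mkv p q r) (mkv p q r) - mkv p q r =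
    mkv (p * (p + q - r - 1)) (q * (p + q - r - 1)) (2^-1 * (4 * p * q - r * (r + 2))).
  by rewrite jmul_mkv sub_mkv; congr mkv; field.
rewrite /Defs.idempotent => /eqP; rewrite -subr_eq0 diffE => /eqP/mkv_eq0 [-> -> /eqP].
by rewrite mulf_eq0 invr_eq0 (negbTE two_neq0) subr_eq0 => /eqP.
Qed.

Lemma idempotent_mkv_cases p q r : Defs.idempotent (mkv p q r) ->
  [\/ mkv p q r = 0, mkv p q r = jone,
      p = 1 + q /\ r = q * 2 | q = 1 + p /\ r = p * 2].
Proof.
case/idempotent_mkv_eqs => Ep Eq Er.
have [s0 | s_neq0] := eqVneq (p + q - r - 1) 0.
  have r_def : r = p + q - 1.
    by apply/subr0_eq; transitivity (- (p + q - r - 1)); [ring | rewrite s0 oppr0].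
  have : (p - q - 1) * (p - q + 1) = 0.
    by transitivity (r * (r + 2) - 4 * p * q); [rewrite r_def; ring | rewrite Er subrr].
  move/eqP; rewrite mulf_eq0 => /orP[] /eqP pq.
    have p_def : p = 1 + q.
      by apply/subr0_eq; transitivity (p - q - 1); [ring | rewrite pq].
    by apply: Or43; split; rewrite // r_def p_def; ring.
  have q_def : q = 1 + p.
    by apply/subr0_eq; transitivity (- (p - q + 1)); [ring | rewrite pq oppr0].
  by apply: Or44; split; rewrite // r_def q_def; ring.
have [p0 q0] : p = 0 /\ q = 0.
  by move/eqP: Ep; move/eqP: Eq; rewrite !mulf_eq0 (negbTE s_neq0) !orbF => /eqP ? /eqP.
move/eqP: Er; rewrite p0 q0 !mulr0 eq_sym mulf_eq0 => /orP[] /eqP r0.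
  by apply: Or41; rewrite r0 mkv0.
by apply: Or42; congr mkv; apply/subr0_eq; rewrite opprK.
Qed.

Lemma prim_nz_idem_lines p q r : prim_nz_idem (mkv p q r) ->
  (p = 1 + q /\ r = q * 2) \/ (q = 1 + p /\ r = p * 2).
Proof.
case=> nz [/idempotent_mkv_cases[] // e1 prim]; [|by left|by right].
by rewrite e1 in prim; case: jone_not_primitive.
Qed.

Lemma fixed_line_a t u :
  jmul (mkv (1 + t) t (t * 2)) u = u <-> exists c, u = c *: mkv (1 + t) t (t * 2).
Proof.
split => [| [c ->]]; last by rewrite scale_mkv jmul_mkv; congr mkv; field.
rewrite [u]mkv_eta; move: (u 0 0) (u 0 1) (u 0 2) => x y z.
pose l1 := t * x + (1 + t) * (y - z); pose l2 := t * x + (t - 1) * y - t * z.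
have fixE : jmul (mkv (1 + t) t (t * 2)) (mkv x y z) - mkv x y z =
    mkv (2^-1 * l1) (2^-1 * l2) l1.
  by rewrite jmul_mkv sub_mkv; congr mkv; rewrite /l1 /l2; field.
have solE : mkv x y z - (x - y) *: mkv (1 + t) t (t * 2) =
    mkv (t * l1 - (1 + t) * l2) (t * l1 - (1 + t) * l2)
        ((t * 2 - 1) * l1 - (1 + t * 2) * l2).
  by rewrite scale_mkv sub_mkv; congr mkv; rewrite /l1 /l2; ring.
move=> /eqP; rewrite -subr_eq0 fixE => /eqP/mkv_eq0 [_ /eqP + l1_0].
rewrite mulf_eq0 invr_eq0 (negbTE two_neq0) /= => /eqP l2_0.
by exists (x - y); apply/eqP; rewrite -subr_eq0 solE l1_0 l2_0 !mulr0 subrr mkv0.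
Qed.

Lemma prim_nz_idem_line_a t : prim_nz_idem (mkv (1 + t) t (t * 2)).
Proof.
split; [|split].
- by case/mkv_eq0 => + t0; rewrite t0 addr0 => /eqP; rewrite oner_eq0.
- by apply/fixed_line_a; exists 1; rewrite scale1r.
- exact: fixed_line_a.
Qed.

Lemma lines_disjoint t s : mkv (1 + t) t (t * 2) <> mkv s (1 + s) (s * 2).
Proof.
case/mkv_inj => ts st _; move/eqP: two_neq0; apply.
by transitivity ((1 + t) - s + ((1 + s) - t)); [ring | rewrite ts -st !subrr addr0].
Qed.

Definition jdir : 'rV[F]_3 := mkv 1 1 2.

Lemma ja_add_jdir t : ja F + t *: jdir = mkv (1 + t) t (t * 2).
Proof. by rewrite scale_mkv add_mkv; congr mkv; ring. Qed.

Lemma jb_add_jdir t : jb F + t *: jdir = mkv t (1 + t) (t * 2).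
Proof. by rewrite scale_mkv add_mkv; congr mkv; ring. Qed.

End Idempotents.

Theorem proposition6p6 (F : fieldType) (hF : (2%:R : F) != 0) :
  exists L1 L2 : 'rV[F]_3 -> Prop,
    affine_line L1 /\ affine_line L2 /\
    (forall x, ~ (L1 x /\ L2 x)) /\
    (forall e, prim_nz_idem e <-> (L1 e \/ L2 e)) /\
    L1 (ja F) /\ L2 (jb F).
Proof.
pose L (o : 'rV[F]_3) x := exists t, x = o + t *: jdir F.
exists (L (ja F)), (L (jb F)).
have jdir_neq0 : jdir F <> 0 by case/mkv_eq0 => /eqP; rewrite oner_eq0.
split; first by exists (ja F), (jdir F).
split; first by exists (jb F), (jdir F).
split.
  by move=> x [[t ->] [s]]; rewrite ja_add_jdir jb_add_jdir; apply: (lines_disjoint hF).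
split; last by split; exists 0; rewrite scale0r addr0.
move=> e; split.
  rewrite [e]mkv_eta => /(prim_nz_idem_lines hF) [[-> ->] | [-> ->]].
    by left; exists (e 0 1); rewrite ja_add_jdir.
  by right; exists (e 0 0); rewrite jb_add_jdir.
case=> -[t ->]; first by rewrite ja_add_jdir; apply: (prim_nz_idem_line_a hF).
by rewrite jb_add_jdir -jswap_mkv; apply/prim_nz_idem_jswap/(prim_nz_idem_line_a hF).
Qed.
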